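(* Let $X$ be a topological space such that the diagonal $\Delta X=\{(x,x):x\in X\}$ is statistically closed in $X\times X$. Then every statistically compact subspace of $X$ is statistically closed in $X$.
   Context: For $A\subseteq\mathbb{N}$ let $d_n(A)=|A\cap\{1,\dots,n\}|/n$, $\overline{d}(A)=\limsup_n d_n(A)$, $\underline{d}(A)=\liminf_n d_n(A)$, and $d(A)$ their common value when equal. A sequence in $X$ is a map from an infinite subset $M\subseteq\mathbb{N}$ into $X$, written $(x_n)_{n\in M}$; a subsequence is $(x_n)_{n\in N}$ with $N\subseteq M$ infinite. It is nonthin if $\overline{d}(M)>0$. A nonthin sequence $(x_n)_{n\in M}$ is statistically convergent to $a\in X$ if for every open $U\ni a$, $d(\{n\in M:x_n\notin U\})=0$. The statistical closure $\overline{F}^{ST}$ of $F\subseteq X$ is the set of $x\in X$ such that some nonthin sequence in $F$ is statistically convergent to $x$; $F$ is statistically closed if $\overline{F}^{ST}=F$. A topological space is statistically compact if every nonthin sequence in it has a nonthin subsequence that is statistically convergent to some point of the space; a subset is statistically compact if it is so in the subspace topology. *)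

From HB Require Import structures.
From mathcomp Require Import all_boot all_order all_algebra.
From mathcomp Require Import all_classical all_reals all_analysis.
From mathcomp Require Import Rstruct Rstruct_topology.
Set Implicit Arguments. Unset Strict Implicit. Unset Printing Implicit Defensive.
Import Order.TTheory GRing.Theory Num.Theory.
Local Open Scope classical_set_scope.
Local Open Scope ring_scope.

(* d_n(A) = |A ∩ {1,...,n}| / n  (for n = 0 the value is 0 and irrelevant) *)
Definition dens_n (A : set nat) (n : nat) : Rdefinitions.R :=
  (\sum_(1 <= k < n.+1) (if `[< A k >] then 1%N else 0%N))%:R / n%:R.

Definition upper_density (A : set nat) : Rdefinitions.R := limn_sup (dens_n A).
Definition lower_density (A : set nat) : Rdefinitions.R := limn_inf (dens_n A).

Definition has_density (A : set nat) (r : Rdefinitions.R) : Prop :=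
  upper_density A = r /\ lower_density A = r.

(* A sequence (x_n)_{n in M}: M an infinite subset of N = {1,2,...}; x is only
   relevant on M. *)
Definition is_seq_dom (M : set nat) : Prop :=
  infinite_set M /\ M `<=` [set n | (0 < n)%N].

Definition nonthin (M : set nat) : Prop :=
  is_seq_dom M /\ 0 < upper_density M.

Definition seq_in {T : Type} (F : set T) (M : set nat) (x : nat -> T) : Prop :=
  forall n, M n -> F (x n).

Definition stat_conv {T : topologicalType} (M : set nat) (x : nat -> T) (a : T)
  : Prop :=
  nonthin M /\
  forall U : set T, open U -> U a -> has_density [set n | M n /\ ~ U (x n)] 0.

Definition stat_closure {T : topologicalType} (F : set T) : set T :=
  [set a | exists (M : set nat) (x : nat -> T),
             nonthin M /\ seq_in F M x /\ stat_conv M x a].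

Definition stat_closed {T : topologicalType} (F : set T) : Prop :=
  stat_closure F = F.

Definition stat_compact_space (T : topologicalType) : Prop :=
  forall (M : set nat) (x : nat -> T), nonthin M ->
    exists N : set nat, N `<=` M /\ nonthin N /\
      exists a : T, stat_conv N x a.

Definition stat_compact_set {T : topologicalType} (K : set T) : Prop :=
  forall (M : set nat) (x : nat -> subspace K), nonthin M -> seq_in K M x ->
    exists N : set nat, N `<=` M /\ nonthin N /\
      exists a : subspace K, K a /\ stat_conv N x a.

Definition diag_set (T : Type) : set (T * T) := [set p | p.1 = p.2].
Arguments diag_set : clear implicits.

(* A statistically convergent sequence in a statistically compact K has a
   subsequence converging statistically to some b in K; the subsequence still
   converges to the original limit a, so the diagonal sequence (x_n, x_n)
   converges statistically to (a, b).  Statistical closedness of the diagonal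
   forces a = b, i.e. statistical limits are unique, and a lies in K. *)
From HB Require Import structures.
From mathcomp Require Import all_boot all_order all_algebra.
From mathcomp Require Import all_classical all_reals all_analysis.
From mathcomp Require Import Rstruct Rstruct_topology.
Set Implicit Arguments. Unset Strict Implicit. Unset Printing Implicit Defensive.
Import Order.TTheory GRing.Theory Num.Theory.
Local Open Scope classical_set_scope.
Local Open Scope ring_scope.

Definition card_upto (A : set nat) (n : nat) : nat :=
  (\sum_(1 <= k < n.+1) (if `[< A k >] then 1%N else 0%N))%N.

Lemma dens_nE A n : dens_n A n = (card_upto A n)%:R / n%:R.
Proof. by []. Qed.

Lemma card_upto_le A n : (card_upto A n <= n)%N.
Proof.
apply: (@leq_trans (\sum_(1 <= k < n.+1) 1)%N).
  by apply: leq_sum => k _; case: asboolP.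
by rewrite sum_nat_const_nat subn1 muln1.
Qed.

Lemma le_card_upto A B n : A `<=` B -> (card_upto A n <= card_upto B n)%N.
Proof.
move=> AB; apply: leq_sum => k _.
by case: asboolP => // /AB Bk; case: asboolP.
Qed.

Lemma card_uptoU A B n : (card_upto (A `|` B) n <= card_upto A n + card_upto B n)%N.
Proof.
rewrite /card_upto -big_split /=; apply: leq_sum => k _.
by case: asboolP => // -[Ak|Bk]; do 2 case: asboolP => //.
Qed.

Lemma dens_n_ge0 A n : 0 <= dens_n A n.
Proof. by rewrite dens_nE divr_ge0. Qed.

Lemma dens_n_le1 A n : dens_n A n <= 1.
Proof.
rewrite dens_nE; case: n => [|n]; first by rewrite invr0 mulr0.
by rewrite ler_pdivrMr ?ltr0n // mul1r ler_nat card_upto_le.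
Qed.

Lemma le_dens_n A B n : A `<=` B -> dens_n A n <= dens_n B n.
Proof. by move=> AB; rewrite !dens_nE ler_wpM2r ?invr_ge0 // ler_nat le_card_upto. Qed.

Lemma dens_nU A B n : dens_n (A `|` B) n <= dens_n A n + dens_n B n.
Proof. by rewrite !dens_nE -mulrDl -natrD ler_wpM2r ?invr_ge0 // ler_nat card_uptoU. Qed.

Lemma has_density0P A : has_density A 0 <-> dens_n A @ \oo --> (0 : Rdefinitions.R).
Proof.
split; last by move=> /cvg_limn_inf_sup[].
move=> [supA0 _].
have ubA : has_ubound (range (dens_n A)) by exists 1 => _ [n _ <-]; exact: dens_n_le1.
have lbA : has_lbound (range (dens_n A)) by exists 0 => _ [n _ <-]; exact: dens_n_ge0.
have supsA := cvg_sups_inf ubA lbA.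
have : limn_sup (dens_n A) = inf (range (sups (dens_n A))) by exact: cvg_lim.
rewrite -/(upper_density A) supA0 => infA0; rewrite -infA0 in supsA.
apply: (squeeze_cvgr _ (cvg_cst (0 : Rdefinitions.R)) supsA); apply: nearW => n.
rewrite dens_n_ge0 /=; apply: ub_le_sup; last by exists n => /=.
exact: has_ubound_sdrop ubA n.
Qed.

Lemma has_density0S A B : A `<=` B -> has_density B 0 -> has_density A 0.
Proof.
move=> AB /has_density0P B0; apply/has_density0P.
apply: (squeeze_cvgr _ (cvg_cst (0 : Rdefinitions.R)) B0).
by apply: nearW => n; rewrite dens_n_ge0 le_dens_n.
Qed.

Lemma has_density0U A B :
  has_density A 0 -> has_density B 0 -> has_density (A `|` B) 0.
Proof.
move=> /has_density0P A0 /has_density0P B0; apply/has_density0P.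
have AB0 : (fun n => dens_n A n + dens_n B n) @ \oo --> (0 : Rdefinitions.R).
  by rewrite -[0 : Rdefinitions.R]addr0; exact: (@cvgD _ Rdefinitions.R^o).
apply: (squeeze_cvgr _ (cvg_cst (0 : Rdefinitions.R)) AB0).
by apply: nearW => n; rewrite dens_n_ge0 dens_nU.
Qed.

Lemma has_density_set0 : has_density set0 0.
Proof.
apply/has_density0P; apply: cvg_near_cst; apply: nearW => n.
by rewrite dens_nE /card_upto big1_seq ?mul0r // => k _; case: asboolP.
Qed.

Lemma nonthin_positive : nonthin [set n | (0 < n)%N].
Proof.
split; first split => //.
  have -> : [set n | (0 < n)%N] = [set: nat] `\` [set 0%N].
    by apply/seteqP; split => -[|n] //= -[_ /(_ erefl)].
  exact: infinite_setD infinite_nat (finite_set1 _).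
have dens1 : dens_n [set n | (0 < n)%N] @ \oo --> (1 : Rdefinitions.R).
  apply: cvg_near_cst; near=> n.
  have n_gt0 : (0 < n)%N by near: n; exists 1%N.
  rewrite dens_nE.
  have -> : card_upto [set n | (0 < n)%N] n = n.
    rewrite /card_upto (@eq_big_nat _ _ _ _ _ _ (fun _ => 1%N)).
      by rewrite sum_nat_const_nat subn1 muln1.
    by move=> i /andP[i_gt0 _]; case: asboolP.
  by rewrite divff // pnatr_eq0 -lt0n.
by rewrite /upper_density (cvg_limn_inf_sup dens1).2 ltr01.
Unshelve. all: by end_near.
Qed.

Section StatisticalConvergence.
Variable T : topologicalType.

Lemma stat_conv_cst (a : T) : stat_conv [set n | (0 < n)%N] (fun=> a) a.
Proof.
split=> [|U _ Ua]; first exact: nonthin_positive.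
by apply: has_density0S has_density_set0 => n [].
Qed.

Lemma subset_stat_closure (F : set T) : F `<=` stat_closure F.
Proof.
move=> a Fa; exists [set n | (0 < n)%N], (fun=> a).
by split; [exact: nonthin_positive | split; [move| exact: stat_conv_cst]].
Qed.

Lemma stat_conv_subseq (M N : set nat) (x : nat -> T) a :
  N `<=` M -> nonthin N -> stat_conv M x a -> stat_conv N x a.
Proof.
move=> NM nonthinN [_ Mxa]; split => // U oU Ua.
by apply: has_density0S (Mxa U oU Ua) => n [/NM].
Qed.

Lemma stat_conv_subspace (K : set T) (N : set nat) (x : nat -> subspace K)
    (b : subspace K) :
  stat_conv N x b -> @stat_conv T N x b.
Proof.
by move=> [nonthinN Nxb]; split => // U oU Ub; apply: Nxb => //; exact: open_subspaceW.
Qed.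

Lemma stat_conv_pair (S : topologicalType) (N : set nat) (x : nat -> T)
    (y : nat -> S) a b :
  stat_conv N x a -> stat_conv N y b ->
  stat_conv N (fun n => (x n, y n)) (a, b).
Proof.
move=> [nonthinN Nxa] [_ Nyb]; split => // W oW Wab.
have [[P Q] /= [aP bQ] PQW] : nbhs (a, b) W by exact: open_nbhs_nbhs.
move: aP bQ; rewrite !nbhsE => -[U [oU Ua] UP] [V [oV Vb] VQ].
apply: has_density0S (has_density0U (Nxa U oU Ua) (Nyb V oV Vb)).
move=> n [Nn notW]; have [Uxn|] := pselect (U (x n)); last by left.
have [Vyn|] := pselect (V (y n)); last by right.
by exfalso; apply: notW; apply: PQW; split; [exact: UP | exact: VQ].
Qed.

Lemma stat_conv_unique (N : set nat) (x : nat -> T) a b :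
  stat_closed (diag_set T) -> stat_conv N x a -> stat_conv N x b -> a = b.
Proof.
move=> closed_diag Nxa Nxb.
have : stat_closure (diag_set T) (a, b).
  exists N, (fun n => (x n, x n)); split; first by case: Nxa.
  by split; [move | exact: stat_conv_pair].
by rewrite closed_diag.
Qed.

End StatisticalConvergence.

Theorem mainTheorem10 (X : topologicalType) :
  stat_closed (diag_set X) ->
  forall K : set X, stat_compact_set K -> stat_closed K.
Proof.
move=> closed_diag K compactK; apply/seteqP; split; last exact: subset_stat_closure.
move=> a [M [x [nonthinM [Kx Mxa]]]].
have [N [NM [nonthinN [b [Kb Nxb]]]]] := compactK M x nonthinM Kx.
suff -> : a = b by [].
apply: (stat_conv_unique closed_diag (stat_conv_subseq NM nonthinN Mxa)).
exact: stat_conv_subspace Nxb.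
Qed.
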